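(* Let $G$ be a finite nonabelian group such that the kernels of the nonlinear irreducible characters of $G$ are totally ordered by inclusion. If $M$ is a normal subgroup of $G$ with $M<G'$, then $M$ is a waist of $G$.
   Context: A nonlinear irreducible character is $\chi\in\mathrm{Irr}(G)$ with $\chi(1)>1$; $\ker\chi=\{g:\chi(g)=\chi(1)\}$. A waist of $G$ is a normal subgroup $W$ such that for every normal subgroup $N$ of $G$, either $N\le W$ or $W\le N$. *)

From HB Require Import structures.
From mathcomp Require Import all_boot all_order all_algebra all_fingroup all_solvable all_field all_character.
Set Implicit Arguments. Unset Strict Implicit. Unset Printing Implicit Defensive.
Import GroupScope.

Definition waist (gT : finGroupType) (G W : {group gT}) : Prop :=
  W <| G /\ forall N : {group gT}, N <| G -> N \subset W \/ W \subset N.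

Definition nonlinear_irr (gT : finGroupType) (G : {group gT}) (i : Iirr G) : bool :=
  (1 < 'chi_i 1%g)%R.

From HB Require Import structures.
From mathcomp Require Import all_boot all_order all_algebra all_fingroup all_solvable all_field all_character.
Set Implicit Arguments. Unset Strict Implicit.
Import GroupScope.
Import GRing.Theory Num.Theory.

(* For a normal subgroup H of G not containing G', call an
   irreducible character chi "minimal over H" if it is nonlinear, H lies in
   ker chi, and ker chi lies in the kernel of every nonlinear irreducible
   character whose kernel contains H.
   - Since H is the intersection of the kernels of the irreducible characters
     containing H in their kernel, and linear ones contain G', some nonlinear
     such character exists; if the nonlinear kernels are totally ordered, one
     with the smallest kernel is minimal over H.
   - If chi is minimal over H then G' :&: ker chi \subset H.
   - If moreover H \subset G', multiplying chi by linear characters shows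
     ker chi \subset G', hence ker chi = H.
   For the theorem, M = ker chi0 with chi0 minimal over M.  A normal N either
   contains G' (so M \subset N) or has a minimal character chiN; comparing
   ker chi0 and ker chiN then gives M \subset N or N \subset M. *)

Section MinimalNonlinearCharacter.
Local Open Scope ring_scope.

Variables (gT : finGroupType) (G : {group gT}).

Lemma nonlinear_irrE (i : Iirr G) :
  nonlinear_irr i = ~~ ('chi_i \is a linear_char).
Proof.
rewrite /nonlinear_irr qualifE /= irr_char /= irr1_degree ltr1n pnatr_eq1.
by case: (irr_degree _) (irr_degree_gt0 (socle_of_Iirr i)) => [|[|n]].
Qed.

Lemma nonlinear_irr_der1 (i : Iirr G) :
  nonlinear_irr i = ~~ ((G^`(1))%g \subset cfker 'chi_i).
Proof. by rewrite nonlinear_irrE lin_irr_der1. Qed.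

Lemma cfker_mul_cancel (phi chi : 'CF(G)) :
  phi \is a character -> chi \is a character -> chi 1%g != 0 ->
  cfker chi :&: cfker (phi * chi) \subset cfker phi.
Proof.
move=> Nphi Nchi nz_chi1; rewrite !cfkerEchar ?rpredM //.
apply/subsetP=> g; rewrite !inE !cfunE => /andP[/andP[Gg /eqP chi_g]].
rewrite Gg chi_g => /andP[_ /eqP eq_g] /=; apply/eqP.
exact: (mulIf nz_chi1).
Qed.

Definition minimal_over (H : {group gT}) (i : Iirr G) : Prop :=
  [/\ nonlinear_irr i, H \subset cfker 'chi_i &
      forall j : Iirr G, nonlinear_irr j -> H \subset cfker 'chi_j ->
        cfker 'chi_i \subset cfker 'chi_j].

Lemma exists_nonlinear_over (H : {group gT}) :
  H <| G -> ~~ ((G^`(1))%g \subset H) ->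
  exists i : Iirr G, nonlinear_irr i && (H \subset cfker 'chi_i).
Proof.
move=> nsHG not_sG'H; apply/existsP; apply: contraNT not_sG'H => /existsPn none.
rewrite -(cap_cfker_normal nsHG); apply/bigcapsP=> i sHker.
by move: (none i); rewrite sHker andbT nonlinear_irr_der1 negbK.
Qed.

(* With totally ordered nonlinear kernels, a kernel of least order among the
   candidates is contained in all the others. *)
Lemma exists_minimal_over (H : {group gT}) :
  (forall i j : Iirr G, nonlinear_irr i -> nonlinear_irr j ->
     cfker 'chi_i \subset cfker 'chi_j \/ cfker 'chi_j \subset cfker 'chi_i) ->
  H <| G -> ~~ ((G^`(1))%g \subset H) ->
  exists i : Iirr G, minimal_over H i.
Proof.
move=> total nsHG not_sG'H.
pose over_H (i : Iirr G) := nonlinear_irr i && (H \subset cfker 'chi_i).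
have [i over_i] := exists_nonlinear_over nsHG not_sG'H.
have [i0 /andP[nl_i0 sH0] least] :=
  arg_minnP (fun i : Iirr G => #|cfker 'chi_i|) (P := over_H) over_i.
exists i0; split=> // j nl_j sHj.
case: (total i0 j nl_i0 nl_j) => [//|sj0].
have le_j0 : (#|cfker 'chi_i0| <= #|cfker 'chi_j|)%N by apply: least; apply/andP.
have eq_j0 : cfker 'chi_j == cfker 'chi_i0 by rewrite eqEcard sj0 le_j0.
by rewrite (eqP eq_j0).
Qed.

(* H is cut out by the characters vanishing on it; the linear ones contain
   G' and the nonlinear ones contain the minimal kernel. *)
Lemma minimal_over_cap_der1 (H : {group gT}) (i : Iirr G) :
  H <| G -> minimal_over H i -> (G^`(1))%g :&: cfker 'chi_i \subset H.
Proof.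
move=> nsHG [_ _ least]; rewrite -(cap_cfker_normal nsHG).
apply/bigcapsP=> j sHj; have [nl_j|] := boolP (nonlinear_irr j).
  exact: subset_trans (subsetIr _ _) (least j nl_j sHj).
by rewrite nonlinear_irr_der1 negbK; apply: subset_trans (subsetIl _ _).
Qed.

(* For H \subset G', twisting by any linear character lambda keeps chi_i
   nonlinear and vanishing on H, so ker chi_i \subset ker lambda; the linear
   kernels intersect in G'. *)
Lemma minimal_over_sub_der1 (H : {group gT}) (i : Iirr G) :
  H \subset (G^`(1))%g -> minimal_over H i -> cfker 'chi_i \subset (G^`(1))%g.
Proof.
move=> sHG' [nl_i sHi least]; rewrite -cap_cfker_lin_irr.
apply/bigcapsP=> j lin_j.
have /irrP[k def_k] := mul_lin_irr lin_j (mem_irr i).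
have nl_k : nonlinear_irr k.
  by rewrite /nonlinear_irr -def_k cfunE lin_char1 // mul1r.
have sHk : H \subset cfker 'chi_k.
  rewrite -def_k; apply: subset_trans (cfker_mul _ _).
  by rewrite subsetI sHi (subset_trans sHG') // -lin_irr_der1.
apply: subset_trans (cfker_mul_cancel (irr_char j) (irr_char i) (irr1_neq0 i)).
by rewrite subsetI subxx def_k least.
Qed.

Lemma minimal_over_kerE (H : {group gT}) (i : Iirr G) :
  H <| G -> H \subset (G^`(1))%g -> minimal_over H i -> cfker 'chi_i = H.
Proof.
move=> nsHG sHG' min_i; apply/eqP; rewrite eqEsubset; case: (min_i) => _ -> _.
rewrite andbT; apply: subset_trans (minimal_over_cap_der1 nsHG min_i).
by rewrite subsetI subxx (minimal_over_sub_der1 sHG' min_i).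
Qed.

End MinimalNonlinearCharacter.

Theorem mainTheorem15 (gT : finGroupType) (G M : {group gT}) :
  ~~ abelian G ->
  (forall i j : Iirr G, nonlinear_irr i -> nonlinear_irr j ->
     cfker ('chi_i)%R \subset cfker ('chi_j)%R \/ cfker ('chi_j)%R \subset cfker ('chi_i)%R) ->
  M <| G -> M \proper G^`(1) ->
  waist G M.
Proof.
move=> _ total nsMG ltMG'; have sMG' := proper_sub ltMG'.
have [i0 min_i0] := exists_minimal_over total nsMG (proper_subn ltMG').
have ker_i0 := minimal_over_kerE nsMG sMG' min_i0.
split=> // N nsNG; have [sG'N|not_sG'N] := boolP (G^`(1) \subset N).
  by right; apply: subset_trans sMG' sG'N.
have [iN min_iN] := exists_minimal_over total nsNG not_sG'N.
have [nl_i0 _ _] := min_i0; have [nl_iN sNkN _] := min_iN.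
have [s0N|sN0] := total i0 iN nl_i0 nl_iN.
  right; apply: subset_trans (minimal_over_cap_der1 nsNG min_iN).
  by rewrite subsetI sMG' -ker_i0.
by left; rewrite -ker_i0 (subset_trans sNkN sN0).
Qed.
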